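(* Let $n\ge 2$. Then $\max\{d_W(\sigma,\rho) : \sigma,\rho\in P^B(\emptyset;n)\} = n^2$.
   Context: $S^B_n$ is the set of bijections $\sigma$ of $\{-n,\dots,-1,1,\dots,n\}$ with $\sigma(-i)=-\sigma(i)$ for all $i$, with multiplication given by composition; a signed permutation is written in one-line notation $\sigma(1)\cdots\sigma(n)$. A signed permutation $\sigma$ has a peak at index $i\in\{2,\dots,n-1\}$ if $\sigma(i-1)<\sigma(i)>\sigma(i+1)$ (usual order on integers). $Peak(\sigma)$ is the set of indices where $\sigma$ has a peak, and for $S\subseteq[n]$, $P^B(S;n)=\{\sigma\in S^B_n : Peak(\sigma)=S\}$. The word metric is $d_W(\sigma,\rho)=\ell_B(\rho^{-1}\sigma)$, where $\ell_B(\gamma)$ is the minimum number of factors in an expression of $\gamma$ as a product of the Coxeter generators $s_0^B,\dots,s_{n-1}^B$; here $s_0^B$ swaps $1$ and $-1$ and fixes all other values, and for $1\le i<n$, $s_i^B$ swaps $i$ with $i+1$ and $-i$ with $-(i+1)$, fixing everything else. *)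

From mathcomp Require Import all_boot all_order all_algebra all_fingroup.
Set Implicit Arguments. Unset Strict Implicit. Unset Printing Implicit Defensive.
Import Order.TTheory GRing.Theory Num.Theory.

(* The ground set {-n,...,-1,1,...,n}: the pair (i, b) with i : 'I_n encodes
   the integer (i+1) if b = false and -(i+1) if b = true. *)
Definition ground (n : nat) : finType := ('I_n * bool)%type.

Definition intval (n : nat) (x : ground n) : int :=
  if x.2 then (- ((x.1 : nat).+1)%:Z)%R else (((x.1 : nat).+1)%:Z)%R.

Definition negg (n : nat) (x : ground n) : ground n := (x.1, ~~ x.2).

(* Bijections of the ground set (MathComp permutations). Note: MathComp's
   product is diagram order, (s * t) x = t (s x). *)
Notation bij n := {perm ground n}.

Definition compose (n : nat) (f g : bij n) : bij n := (g * f)%g.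

Definition is_signed (n : nat) (s : bij n) : bool :=
  [forall x : ground n, s (negg x) == negg (s x)].

(* one-line notation value sigma(i), for 1 <= i <= n (0 outside) *)
Definition oneline (n : nat) (s : bij n) (i : nat) : int :=
  if (0 < i <= n)%N then
    (match insub i.-1 with Some j => intval (s (j, false)) | None => 0%R end)
  else 0%R.

Definition has_peak (n : nat) (s : bij n) (i : nat) : bool :=
  [&& (2 <= i)%N, (i <= n.-1)%N,
      (oneline s i.-1 < oneline s i)%R & (oneline s i.+1 < oneline s i)%R].

(* Peak(sigma) as a subset of {0,...,n} (only indices in [n] can occur). *)
Definition Peak (n : nat) (s : bij n) : {set 'I_n.+1} :=
  [set i : 'I_n.+1 | has_peak s i].

Definition PB (n : nat) (S : {set 'I_n.+1}) : {set bij n} :=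
  [set s : bij n | is_signed s & Peak s == S].

Definition predord (n : nat) (k : 'I_n) : 'I_n :=
  Ordinal (leq_ltn_trans (leq_pred k) (ltn_ord k)).

Definition gen (n : nat) (k : 'I_n) : bij n :=
  if (k : nat) == 0%N then tperm (k, false) (k, true)
  else compose (tperm (predord k, false) (k, false))
               (tperm (predord k, true) (k, true)).

Definition word_prod (n : nat) (w : seq 'I_n) : bij n :=
  foldr (fun k g => compose (gen k) g) 1%g w.

Definition lengthB_le (n : nat) (g : bij n) (k : nat) : Prop :=
  exists w : seq 'I_n, (size w <= k)%N /\ word_prod w = g.

Definition dW_le (n : nat) (s r : bij n) (k : nat) : Prop :=
  lengthB_le (compose (r^-1)%g s) k.

From mathcomp Require Import all_boot all_order all_algebra all_fingroup.
From mathcomp Require Import zify.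
Set Implicit Arguments. Unset Strict Implicit. Unset Printing Implicit Defensive.
Import Order.TTheory GRing.Theory Num.Theory.

(* The number [ninv g] of triples in [invset g] (pairs i < j with g(i) > g(j), and pairs
   i <= j with g(i) + g(j) < 0) is the Coxeter length of a signed permutation g.
   Left multiplication by a generator s_k changes [invset g] in at most one triple, so
   [ninv g] bounds the length from below; and every signed g <> 1 has a generator removing
   a triple, so g is a product of [ninv g] generators. Hence the length is at most n^2, the
   size of the whole index set, and the negation -id, whose inversion set is everything,
   attains it. Both 1 and -id have no peaks, and d_W(1, -id) = ell_B(-id) = n^2. *)

Ltac case_bool c := let h := fresh in case: (boolP c) => h; rewrite ?h ?(negbTE h) /=.

Definition gen_abs (k t : nat) : nat :=
  if k == 0%N then t else if t == k.-1 then k else if t == k then k.-1 else t.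

Lemma gen_coords n (k i : 'I_n) b :
  ((gen k (i, b)).1 : nat) = gen_abs k i /\
  (gen k (i, b)).2 = if ((k : nat) == 0%N) && ((i : nat) == k) then ~~ b else b.
Proof.
rewrite /gen /gen_abs; case: eqP => k0 /=.
  rewrite permE /= !xpair_eqE -!val_eqE /= k0.
  by case: b; case: ((i : nat) =P 0%N) => h /=; rewrite ?h; lia.
rewrite /compose permM !permE /= !xpair_eqE -!val_eqE /=.
case: b => /=; rewrite ?andbT ?andbF /=.
all: case: ((i : nat) =P k.-1) => h; rewrite ?xpair_eqE -?val_eqE /= ?andbT ?andbF /=.
all: try (case: ((i : nat) =P k) => h'); rewrite ?xpair_eqE -?val_eqE /= ?andbT ?andbF /=.
all: try (split; lia).
all: repeat (case: ifP; rewrite -?val_eqE /= => ?); split; lia.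
Qed.

Lemma ground_eqP n (x y : ground n) : x = y <-> ((x.1 : nat) = y.1 /\ x.2 = y.2).
Proof.
split=> [->//|[e1 e2]]; case: x y e1 e2 => [i b] [j c] /= e1 ->.
by congr pair; apply: val_inj.
Qed.

Lemma signedP n (s : bij n) : reflect (forall x, s (negg x) = negg (s x)) (is_signed s).
Proof. by apply: (iffP forallP) => h x; apply/eqP. Qed.

Lemma gen_signed n (k : 'I_n) : is_signed (gen k).
Proof.
apply/signedP => -[i b]; rewrite /negg /=.
case E: (gen k (i, b)) => [j c] /=.
have [e1 e2] := gen_coords k i b; have [e3 e4] := gen_coords k i (~~ b).
rewrite E /= in e1 e2; apply/ground_eqP; rewrite e3 e4 e1 e2 /=.
by split=> //; case: ifP.
Qed.

Lemma gen_involutive n (k : 'I_n) : involutive (gen k).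
Proof.
case=> i b; case E: (gen k (i, b)) => [j c].
have [e1 e2] := gen_coords k i b; rewrite E /= in e1 e2.
have [e3 e4] := gen_coords k j c; apply/ground_eqP; rewrite e3 e4 e1 e2 /=.
clear E e3 e4; subst c; rewrite /gen_abs in e1 *; rewrite ?e1; case: b => /=; split;
case_bool ((k : nat) == 0%N); case_bool ((i : nat) == k.-1); case_bool ((i : nat) == k);
repeat (case: ifP => ? /=); lia.
Qed.

Lemma compose_gen_gen n (k : 'I_n) (g : bij n) : compose (gen k) (compose (gen k) g) = g.
Proof. by apply/permP => x; rewrite /compose !permM gen_involutive. Qed.

Lemma signed_compose n (f g : bij n) : is_signed f -> is_signed g -> is_signed (compose f g).
Proof. by move=> /signedP hf /signedP hg; apply/signedP => x; rewrite /compose !permM hg hf. Qed.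

Lemma signedV n (g : bij n) : is_signed g -> is_signed (g^-1)%g.
Proof.
move=> /signedP hg; apply/signedP => x.
by apply: (@perm_inj _ g); rewrite hg !permKV; case: x.
Qed.

Lemma signed1 n : is_signed (1%g : bij n).
Proof. by apply/signedP => x; rewrite !perm1. Qed.

Lemma word_prod_signed n (w : seq 'I_n) : is_signed (word_prod w).
Proof.
elim: w => [|k w IH] /=; first exact: signed1.
exact: signed_compose (gen_signed k) IH.
Qed.

Lemma signed_abs_inj n (g : bij n) i j : is_signed g ->
  ((g (i, false)).1 : nat) = (g (j, false)).1 -> i = j.
Proof.
move=> /signedP hg e.
case E: ((g (i, false)).2 == (g (j, false)).2).
  have : g (i, false) = g (j, false) by apply/ground_eqP; split=> //; apply/eqP.
  by move/perm_inj => [].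
have : g (i, false) = g (negg (j, false)).
  rewrite hg; apply/ground_eqP; split=> //=.
  by move: E; case: (g (i, false)).2; case: (g (j, false)).2.
by move/perm_inj.
Qed.

Lemma signed_permKV_fst n (g : bij n) (m : 'I_n) : is_signed g ->
  g (((g^-1)%g (m, false)).1, false) = (m, ((g^-1)%g (m, false)).2).
Proof.
move=> /signedP sg; case E: ((g^-1)%g (m, false)) => [p []] /=; last by rewrite -E permKV.
by rewrite -[(p, false)]/(negg (p, true)) sg -E permKV.
Qed.

Local Open Scope ring_scope.

Definition signed_int (a : nat) (s : bool) : int := if s then - (a.+1)%:Z else (a.+1)%:Z.

(* Positions are 0-based: [x] and [y] stand for sigma(i+1) and sigma(j+1); for i = j the
   triple (i, i, true) records a negative entry. *)
Definition is_inversion (i j : nat) (b : bool) (x y : int) : bool :=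
  if b then (i <= j)%N && (x + y < 0) else (i < j)%N && (y < x).

Lemma is_inversion_gen_abs_change (k a c i j : nat) (sa sc b : bool) : k != 0%N ->
  (if i == j then (a == c) && (sa == sc) else a != c) ->
  is_inversion i j b (signed_int (gen_abs k a) sa) (signed_int (gen_abs k c) sc)
    != is_inversion i j b (signed_int a sa) (signed_int c sc) ->
  [/\ (i < j)%N, ((a == k.-1) && (c == k)) || ((a == k) && (c == k.-1)) & b = (sa != sc)].
Proof.
case: k => // k _; rewrite /gen_abs /is_inversion /signed_int /=.
case_bool (i == j); case: sa; case: sc; case: b => /=;
case_bool (a == k); case_bool (a == k.+1); case_bool (c == k); case_bool (c == k.+1);
move=> ? ?; split; lia.
Qed.

Lemma is_inversion_flip0_change (a c i j : nat) (sa sc b : bool) :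
  (if i == j then (a == c) && (sa == sc) else a != c) ->
  is_inversion i j b (signed_int a (if a == 0%N then ~~ sa else sa))
                     (signed_int c (if c == 0%N then ~~ sc else sc))
    != is_inversion i j b (signed_int a sa) (signed_int c sc) ->
  [/\ i = j, a = 0%N & b = true].
Proof.
rewrite /is_inversion /signed_int.
case_bool (i == j); case: sa; case: sc; case: b => /=;
case_bool (a == 0%N); case_bool (c == 0%N); move=> ? ?; split; lia.
Qed.

Definition invset n (g : bij n) : {set 'I_n * 'I_n * bool} :=
  [set x : 'I_n * 'I_n * bool | is_inversion x.1.1 x.1.2 x.2 (intval (g (x.1.1, false))) (intval (g (x.1.2, false)))].

Definition ninv n (g : bij n) : nat := #|invset g|.

Lemma mem_invset n (g : bij n) i j b :
  ((i, j, b) \in invset g) =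
  is_inversion i j b (signed_int (g (i, false)).1 (g (i, false)).2)
                     (signed_int (g (j, false)).1 (g (j, false)).2).
Proof. by rewrite inE. Qed.

Lemma intval_gen n (k : 'I_n) (x : ground n) :
  intval (gen k x) =
  signed_int (gen_abs k x.1)
             (if ((k : nat) == 0%N) && ((x.1 : nat) == k) then ~~ x.2 else x.2).
Proof. by case: x => a s; have [e1 e2] := gen_coords k a s; rewrite /intval e1 e2. Qed.

Lemma mem_invset_gen n (k : 'I_n) (g : bij n) i j b :
  ((i, j, b) \in invset (compose (gen k) g)) =
  is_inversion i j b (intval (gen k (g (i, false)))) (intval (gen k (g (j, false)))).
Proof. by rewrite inE /compose !permM. Qed.

Lemma signed_values_distinct n (g : bij n) (i j : 'I_n) : is_signed g ->
  if (i : nat) == j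
  then (((g (i, false)).1 : nat) == (g (j, false)).1) && ((g (i, false)).2 == (g (j, false)).2)
  else ((g (i, false)).1 : nat) != (g (j, false)).1.
Proof.
move=> sg; case: ((i : nat) =P j) => e; first by rewrite (val_inj e) !eqxx.
by apply/eqP => /(signed_abs_inj sg) h; apply: e; rewrite h.
Qed.

Lemma invset_gen_change n (k : 'I_n) (g : bij n) i j b : is_signed g -> (k : nat) != 0%N ->
  ((i, j, b) \in invset (compose (gen k) g)) != ((i, j, b) \in invset g) ->
  [/\ (i < j)%N,
      ((((g (i, false)).1 : nat) == k.-1) && (((g (j, false)).1 : nat) == k))
      || ((((g (i, false)).1 : nat) == k) && (((g (j, false)).1 : nat) == k.-1))
    & b = ((g (i, false)).2 != (g (j, false)).2)].
Proof.
move=> sg k0; rewrite mem_invset_gen mem_invset !intval_gen (negbTE k0) /=.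
exact: is_inversion_gen_abs_change k0 (signed_values_distinct i j sg).
Qed.

Lemma invset_gen0_change n (k : 'I_n) (g : bij n) i j b : is_signed g -> (k : nat) = 0%N ->
  ((i, j, b) \in invset (compose (gen k) g)) != ((i, j, b) \in invset g) ->
  [/\ i = j, ((g (i, false)).1 : nat) = 0%N & b = true].
Proof.
move=> sg k0; rewrite mem_invset_gen mem_invset !intval_gen k0 /= /gen_abs /=.
move=> h; have [e1 e2 e3] := is_inversion_flip0_change (signed_values_distinct i j sg) h.
by split=> //; apply: val_inj.
Qed.

Lemma invset_gen_change_uniq n (k : 'I_n) (g : bij n) x y : is_signed g ->
  (x \in invset (compose (gen k) g)) != (x \in invset g) ->
  (y \in invset (compose (gen k) g)) != (y \in invset g) -> x = y.
Proof.
case: x y => [[i j] b] [[i' j'] b'] sg.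
have H p q : ((g (p, false)).1 : nat) = (g (q, false)).1 -> p = q by exact: signed_abs_inj.
have [k0|k0] := eqVneq (k : nat) 0%N.
  move=> /(invset_gen0_change sg k0) [-> e ->] /(invset_gen0_change sg k0) [-> e' ->].
  by rewrite (H j j') // e e'.
move=> /(invset_gen_change sg k0) [lt ch ->] /(invset_gen_change sg k0) [lt' ch' ->].
case/orP: ch => /andP[/eqP e1 /eqP e2]; case/orP: ch' => /andP[/eqP e3 /eqP e4].
- by rewrite (H i i') ?e1 ?e3 // (H j j') // e2 e4.
- by move: lt lt'; rewrite (H i j') ?e1 ?e4 // (H j i') ?e2 ?e3 //; lia.
- by move: lt lt'; rewrite (H i j') ?e1 ?e4 // (H j i') ?e2 ?e3 //; lia.
- by rewrite (H i i') ?e1 ?e3 // (H j j') // e2 e4.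
Qed.

Section SymmetricDifferenceAtMostOne.
Variables (T : finType) (A B : {set T}).
Hypothesis diff_uniq : forall x y, (x \in A) != (x \in B) -> (y \in A) != (y \in B) -> x = y.

Lemma card_diff_uniq_le : (#|A| <= #|B| + 1)%N.
Proof.
have [x0 /= hx0|] := pickP [pred x | (x \in A) != (x \in B)]; last first.
  move=> same; rewrite addn1 ltnW // ltnS subset_leq_card //.
  apply/subsetP => y hy; apply/negPn/negP => /negbTE hyB.
  by have := same y; rewrite /= hy hyB.
have sub : A \subset x0 |: B.
  apply/subsetP => y hy; rewrite in_setU1; apply/orP.
  case: (boolP (y \in B)) => hyB; [by right | left].
  by apply/eqP; apply: diff_uniq hx0; rewrite hy (negbTE hyB).
by apply: leq_trans (subset_leq_card sub) _; rewrite cardsU1 addnC leq_add2l leq_b1.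
Qed.

Lemma card_diff_uniq_lt x : x \in B -> x \notin A -> (#|A| < #|B|)%N.
Proof.
move=> hxB hxA; apply/proper_card/properP; split; last by exists x.
apply/subsetP => y hy; case: (boolP (y \in B)) => // hyB.
have eyx : y = x by apply: diff_uniq; rewrite ?hy ?(negbTE hyB) ?hxB ?(negbTE hxA).
by rewrite -eyx hy in hxA.
Qed.

End SymmetricDifferenceAtMostOne.

Lemma ninv_gen_le n (k : 'I_n) (g : bij n) : is_signed g ->
  (ninv (compose (gen k) g) <= ninv g + 1)%N.
Proof. by move=> sg; apply: card_diff_uniq_le => x y; apply: invset_gen_change_uniq. Qed.

Lemma ninv_gen_lt n (k : 'I_n) (g : bij n) x : is_signed g ->
  x \in invset g -> x \notin invset (compose (gen k) g) ->
  (ninv (compose (gen k) g) < ninv g)%N.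
Proof. by move=> sg; apply: card_diff_uniq_lt => y z; apply: invset_gen_change_uniq. Qed.

Lemma ninv1 n : ninv (1%g : bij n) = 0%N.
Proof.
apply/eqP; rewrite cards_eq0; apply/eqP/setP => -[[i j] b].
by rewrite mem_invset in_set0 !perm1 /is_inversion /signed_int /=; case: b; lia.
Qed.

Lemma ninv_word_prod n (w : seq 'I_n) : (ninv (word_prod w) <= size w)%N.
Proof.
elim: w => [|k w IH] /=; first by rewrite ninv1.
by apply: leq_trans (ninv_gen_le k (word_prod_signed w)) _; rewrite addn1.
Qed.

Definition index_triples n : {set 'I_n * 'I_n * bool} :=
  [set x : 'I_n * 'I_n * bool | if x.2 then (x.1.1 <= x.1.2)%N else (x.1.1 < x.1.2)%N].

Definition order_pair n (p : 'I_n * 'I_n) : 'I_n * 'I_n * bool :=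
  if (p.1 < p.2)%N then (p.1, p.2, false) else (p.2, p.1, true).

Lemma order_pair_inj n : injective (@order_pair n).
Proof.
move=> [a b] [c d]; rewrite /order_pair /=.
by case: ifP => h1; case: ifP => h2 // [e1 e2]; subst => //; lia.
Qed.

Lemma card_index_triples n : #|index_triples n| = (n * n)%N.
Proof.
have -> : index_triples n = @order_pair n @: [set: 'I_n * 'I_n].
  apply/setP => -[[i j] b]; rewrite inE /=; apply/idP/imsetP.
    case: b => h.
      by exists (j, i); rewrite ?inE // /order_pair /=; case: ifP => //; lia.
    by exists (i, j); rewrite ?inE // /order_pair /= h.
  by case=> -[a c] _; rewrite /order_pair /=; case: ifP => h [-> -> ->] //=; lia.
by rewrite card_imset ?cardsT ?card_prod ?card_ord //; exact: order_pair_inj.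
Qed.

Lemma invset_sub n (g : bij n) : invset g \subset index_triples n.
Proof. by apply/subsetP => -[[i j] []]; rewrite !inE /is_inversion /= => /andP []. Qed.

Lemma ninv_le n (g : bij n) : (ninv g <= n * n)%N.
Proof. by rewrite -card_index_triples subset_leq_card ?invset_sub. Qed.

(* Without a left descent, the preimages [g^-1(1), ..., g^-1(n)] are positive and sit at
   strictly increasing positions, which forces [g = 1]. *)
Section NoLeftDescent.
Variables (n : nat) (g : bij n).
Hypothesis sg : is_signed g.
Hypothesis no_descent :
  forall (k : 'I_n) x, x \in invset g -> x \in invset (compose (gen k) g).

Let preim (m : 'I_n) : ground n := (g^-1)%g (m, false).

Lemma preim0_positive (m : 'I_n) : (m : nat) = 0%N -> (preim m).2 = false.
Proof.
move=> m0; case E: (preim m).2 => //.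
have h := signed_permKV_fst m sg; rewrite -/(preim m) E in h.
have := no_descent m (x := ((preim m).1, (preim m).1, true)).

rewrite mem_invset_gen mem_invset !intval_gen h /= m0 /gen_abs /is_inversion /signed_int /= leqnn /=.
by move/(_ isT); lia.
Qed.

Lemma preim_succ (m k : 'I_n) : (k : nat) = (m : nat).+1 -> (preim m).2 = false ->
  (preim k).2 = false /\ ((preim m).1 < (preim k).1)%N.
Proof.
move=> ek sm; have k0 : (k : nat) != 0%N by rewrite ek.
have hm := signed_permKV_fst m sg; rewrite -/(preim m) sm in hm.
have hk := signed_permKV_fst k sg; rewrite -/(preim k) in hk.
set p := (preim m).1 in hm *; set q := (preim k).1 in hk *.
have pq : (p : nat) != q.
  by apply/eqP => /val_inj e; move: hm; rewrite e hk => -[] /(congr1 val) /=; lia.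
case: (preim k).2 hk => hk; last split=> //.
all: have [lt_pq|lt_qp|e] := ltngtP p q; try by [|rewrite e eqxx in pq].
1: have := no_descent k (x := (p, q, true)).
2: have := no_descent k (x := (q, p, true)).
3: have := no_descent k (x := (q, p, false)).
all: rewrite mem_invset_gen mem_invset !intval_gen hm hk /gen_abs (negbTE k0) /= ek.
all: rewrite /is_inversion /signed_int /= ?succnK ?eqxx /=; repeat (case: ifP => ? /=); lia.
Qed.

Lemma preim_shift d (o o' : 'I_n) : (o' : nat) = (o + d)%N -> (preim o).2 = false ->
  ((preim o).1 + d <= (preim o').1)%N /\ (preim o').2 = false.
Proof.
elim: d o' => [|d IH] o' e so.
  by rewrite (_ : o' = o) ?addn0 //; apply: val_inj => /=; rewrite e addn0.
have lt_od : (o + d < n)%N by have := ltn_ord o'; lia.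
have [le_d pos_d] := IH (Ordinal lt_od) erefl so.
have [pos' lt'] := preim_succ (m := Ordinal lt_od) (k := o') ltac:(by rewrite e addnS) pos_d.
by split=> //; rewrite addnS; apply: leq_ltn_trans lt'.
Qed.

Lemma no_left_descent_id : g = 1%g.
Proof.
suff ginv1 : (g^-1)%g = 1%g by rewrite -(invgK g) ginv1 invg1.
apply/permP => -[o b]; rewrite perm1.
have n_gt0 : (0 < n)%N by apply: leq_ltn_trans (ltn_ord o).
pose o0 : 'I_n := Ordinal n_gt0.
have last_lt : (n.-1 < n)%N by rewrite ltn_predL.
pose olast : 'I_n := Ordinal last_lt.
have [le_o pos_o] := preim_shift (o := o0) (o' := o) (d := o) erefl (preim0_positive (m := o0) erefl).
have [le_last _] := preim_shift (o := o) (o' := olast) (d := (n.-1 - o)%N)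
  ltac:(by rewrite /= subnKC // -ltnS prednK // ltn_ord) pos_o.
have preim_o : preim o = (o, false).
  apply/ground_eqP; split=> //=; move: le_o le_last (ltn_ord (preim olast).1) (ltn_ord o).
  rewrite /=; lia.
case: b; last exact: preim_o.
by rewrite -[(o, true)]/(negg (o, false)); have /signedP -> := signedV sg; rewrite -/(preim o) preim_o.
Qed.

End NoLeftDescent.

Lemma exists_left_descent n (g : bij n) : is_signed g -> g != 1%g ->
  exists k : 'I_n, exists2 x, x \in invset g & x \notin invset (compose (gen k) g).
Proof.
move=> sg ng.
case: (boolP [exists k, exists x, (x \in invset g) && (x \notin invset (compose (gen k) g))]).
  by case/existsP => k /existsP [x /andP [hx hx']]; exists k, x.
rewrite negb_exists => /forallP nodesc; case/eqP: ng; apply: no_left_descent_id => // k x hx.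
by move: (nodesc k); rewrite negb_exists => /forallP /(_ x); rewrite hx negbK.
Qed.

Lemma lengthB_le_ninv n (g : bij n) : is_signed g -> lengthB_le g (ninv g).
Proof.
move=> sg; have [N le_gN] : exists N, (ninv g <= N)%N by exists (ninv g).
elim: N g sg le_gN => [|N IH] g sg le_gN.
all: have [->|ng] := eqVneq g 1%g; try by exists [::].
all: have [k [x hx hx']] := exists_left_descent sg ng.
all: have lt_ninv := ninv_gen_lt sg hx hx'.
  by have := leq_trans lt_ninv le_gN; rewrite ltn0.
have [w [size_w w_g]] :=
  IH _ (signed_compose (gen_signed k) sg) (leq_trans lt_ninv le_gN).
exists (k :: w); split; first exact: leq_ltn_trans size_w lt_ninv.
by rewrite /= w_g compose_gen_gen.
Qed.

Lemma negg_involutive n : involutive (@negg n).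
Proof. by case=> i b; rewrite /negg /= negbK. Qed.

Definition negation n : bij n := perm (inv_inj (@negg_involutive n)).

Lemma negationE n x : negation n x = negg x.
Proof. by rewrite permE. Qed.

Lemma negation_signed n : is_signed (negation n).
Proof. by apply/signedP => x; rewrite !negationE. Qed.

Lemma negationV n : ((negation n)^-1)%g = negation n.
Proof.
by apply/permP => x; apply: (@perm_inj _ (negation n)); rewrite permKV !negationE negg_involutive.
Qed.

Lemma invset_negation n : invset (negation n) = index_triples n.
Proof.
apply/setP => -[[i j] b]; rewrite mem_invset !negationE inE /is_inversion /signed_int /=.
by case: b; lia.
Qed.

Lemma ninv_negation n : ninv (negation n) = (n * n)%N.
Proof. by rewrite /ninv invset_negation card_index_triples. Qed.

Lemma onelineE n (s : bij n) (f : nat -> int) (i : nat) :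
  (forall j : 'I_n, intval (s (j, false)) = f (j : nat).+1) ->
  (0 < i <= n)%N -> oneline s i = f i.
Proof.
move=> sf i_in; rewrite /oneline i_in.
case: insubP => [j _ ej | /negP []]; first by rewrite sf ej prednK //; case/andP: i_in.
by move: i_in; rewrite -subn1; lia.
Qed.

Lemma Peak_eq0_monotone n (s : bij n) (f : nat -> int) :
  (forall j : 'I_n, intval (s (j, false)) = f (j : nat).+1) ->
  {homo f : i j / (i < j)%N >-> i < j} \/ {homo f : i j / (i < j)%N >-> j < i} ->
  Peak s = set0.
Proof.
move=> sf mono; apply/setP => i; rewrite !inE /has_peak.
apply/negbTE/negP => /and4P [i_ge2 i_le up down].
have i_lt := ltn_ord i.
rewrite !(onelineE sf) in up down; try by rewrite -?subn1; lia.
case: mono => mono.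
- by have := mono i i.+1 (ltnSn i); rewrite ltNge le_eqVlt down orbT.
- by have := mono i.-1 i ltac:(by rewrite -subn1; lia); rewrite ltNge le_eqVlt up orbT.
Qed.

Lemma Peak1 n : Peak (1%g : bij n) = set0.
Proof.
apply: (Peak_eq0_monotone (f := fun m : nat => m%:Z)); first by move=> j; rewrite perm1.
by left => i j; rewrite ltz_nat.
Qed.

Lemma Peak_negation n : Peak (negation n) = set0.
Proof.
apply: (Peak_eq0_monotone (f := fun m : nat => - m%:Z)); first by move=> j; rewrite negationE.
by right => i j; rewrite ltrN2 ltz_nat.
Qed.

Local Close Scope ring_scope.

Theorem corollary4p2 (n : nat) (hn : (2 <= n)%N) :
  (forall s r : bij n, s \in PB set0 -> r \in PB set0 -> dW_le s r (n ^ 2)) /\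
  (exists s r : bij n, [/\ s \in PB set0, r \in PB set0 & ~ dW_le s r (n ^ 2).-1]).
Proof.
split.
  move=> s r; rewrite !inE => /andP [ss _] /andP [sr _].
  have [w [size_w w_prod]] := lengthB_le_ninv (signed_compose (signedV sr) ss).
  by exists w; split=> //; rewrite (leq_trans size_w) // -mulnn ninv_le.
exists 1%g, (negation n); split.
- by rewrite inE signed1 Peak1 eqxx.
- by rewrite inE negation_signed Peak_negation eqxx.
move=> [w [size_w w_prod]].
have := ninv_word_prod w.
rewrite w_prod /compose mul1g negationV ninv_negation.
by move: size_w; rewrite -mulnn -subn1; lia.
Qed.
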